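(* Let $C\in U(2)$ be a quantum coin. If $C$ is non-trivial, then there exist exactly two unit vectors $\gamma_1,\gamma_2\in\mathbb{C}^2$, counted up to multiplication by a global phase $e^{i\eta}$, such that the coin setups $(C,\gamma_1)$ and $(C,\gamma_2)$ are symmetric in distribution. If $C$ is trivial, then there exist uncountably many unit vectors $\gamma\in\mathbb{C}^2$, pairwise not equal up to a global phase, such that $(C,\gamma)$ is symmetric in distribution.
   Context: Let $\mathcal{H}=\ell^2(\mathbb{Z})\otimes\mathbb{C}^2$, with position basis $\{|j\rangle: j\in\mathbb{Z}\}$ of $\ell^2(\mathbb{Z})$ and orthonormal basis $\{|\uparrow\rangle,|\downarrow\rangle\}$ of $\mathbb{C}^2$. A (quantum) coin is any $C\in U(2)$, written $C=a|\uparrow\rangle\langle\uparrow|+b|\uparrow\rangle\langle\downarrow|+c|\downarrow\rangle\langle\uparrow|+d|\downarrow\rangle\langle\downarrow|$; $C$ is called trivial iff $abcd=0$, non-trivial otherwise. The conditional translation is $T=\sum_{j\in\mathbb{Z}}|j+1\rangle\langle j|\otimes|\uparrow\rangle\langle\uparrow|+\sum_{j\in\mathbb{Z}}|j-1\rangle\langle j|\otimes|\downarrow\rangle\langle\downarrow|$ and the walk operator is $W(C)=T(\mathbb{1}\otimes C)$. A coin setup is a pair $(C,\gamma)$ with $C\in U(2)$ and $\gamma\in\mathbb{C}^2$ a unit vector (the initial coin state). Its induced distributions are $p_{(C,\gamma)}(j,n)=\langle\psi_n|(|j\rangle\langle j|\otimes\mathbb{1})|\psi_n\rangle$ with $\psi_n=W(C)^n(|0\rangle\otimes\gamma)$,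 for $j\in\mathbb{Z}$, $n\in\mathbb{N}$. A coin setup is called symmetric in distribution if $p_{(C,\gamma)}(j,n)=p_{(C,\gamma)}(-j,n)$ for all $j\in\mathbb{Z}$ and all $n\in\mathbb{N}$. *)

From HB Require Import structures.
From mathcomp Require Import all_boot all_order all_algebra.
From mathcomp Require Import complex.
From mathcomp Require Import boolp classical_sets cardinality reals trigo.
Set Implicit Arguments. Unset Strict Implicit. Unset Printing Implicit Defensive.
Import Order.TTheory GRing.Theory Num.Theory.
Local Open Scope ring_scope.
Local Open Scope complex_scope.

Section QW.
Variable R : realType.

Definition up : 'I_2 := ord0.
Definition down : 'I_2 := ord_max.

Definition qw_adj (m n : nat) (A : 'M[R[i]]_(m, n)) : 'M[R[i]]_(n, m) :=
  \matrix_(i, j) (A j i)^*.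

Definition qw_unitary (C : 'M[R[i]]_2) : Prop := C *m qw_adj C = 1%:M.

Definition is_unit_vector (g : 'cV[R[i]]_2) : Prop :=
  `|g up 0| ^+ 2 + `|g down 0| ^+ 2 = 1.

(* C = a|u><u| + b|u><d| + c|d><u| + d|d><d| ; trivial iff abcd = 0 *)
Definition trivial_coin (C : 'M[R[i]]_2) : Prop :=
  C up up * C up down * C down up * C down down = 0.

(* states in l^2(Z) (x) C^2 reached by the walk are finitely supported;
   represented as functions Z -> C^2 *)
Definition walk_step (C : 'M[R[i]]_2) (psi : int -> 'cV[R[i]]_2) : int -> 'cV[R[i]]_2 :=
  fun j => \col_k (if k == up then (C *m psi (j - 1)) up 0
                   else (C *m psi (j + 1)) down 0).

Definition init_state (g : 'cV[R[i]]_2) : int -> 'cV[R[i]]_2 :=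
  fun j => if j == 0 then g else 0.

Definition psi_n (C : 'M[R[i]]_2) (g : 'cV[R[i]]_2) (n : nat) : int -> 'cV[R[i]]_2 :=
  iter n (walk_step C) (init_state g).

Definition prob (C : 'M[R[i]]_2) (g : 'cV[R[i]]_2) (j : int) (n : nat) : R[i] :=
  `|psi_n C g n j up 0| ^+ 2 + `|psi_n C g n j down 0| ^+ 2.

Definition symmetric_in_distribution (C : 'M[R[i]]_2) (g : 'cV[R[i]]_2) : Prop :=
  forall (j : int) (n : nat), prob C g j n = prob C g (- j) n.

Definition phase (eta : R) : R[i] := (cos eta)%:C + 'i * (sin eta)%:C.

Definition phase_equiv (g1 g2 : 'cV[R[i]]_2) : Prop :=
  exists eta : R, g2 = phase eta *: g1.

End QW.

(* A coin setup (C, g) is symmetric in distribution as soon as a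
   map psi(j) |-> (w^j p psi_down(-j), w^j q psi_up(-j)) / lam, with |w| = 1 and
   |p| = |q| = |lam|, fixes g and commutes with the walk.  A unitary coin is
   either diagonal or antidiagonal (trivial), or [[a, b], [-e b^*, e a^*]] with
   |e| = 1 and a, b nonzero.  For a trivial coin every balanced state
   (1, u)/sqrt 2 with |u| = 1 admits such a map, a continuum of pairwise
   phase-inequivalent symmetric states.  For a nontrivial coin the balanced
   states (1, t)/sqrt 2 and (1, -t)/sqrt 2 with t^2 a^* b = - a b^* admit one;
   conversely, p(1,1) = p(-1,1) and p(1,3) = p(-1,3) force |g_up| = |g_down| and
   Re (a b^* g_up g_down^* ) = 0, whence g_down = t g_up or g_down = -t g_up. *)

From Pilot Require Import Defs.
From HB Require Import structures.
From mathcomp Require Import all_boot all_order all_algebra.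
From mathcomp Require Import complex.
From mathcomp Require Import boolp classical_sets cardinality reals trigo.
From mathcomp Require Import ring.
From mathcomp Require Import ereal measure lebesgue_measure.
Import Order.TTheory GRing.Theory Num.Theory.
Local Open Scope ring_scope.

Set Implicit Arguments.
Unset Strict Implicit.

Local Notation down := Defs.down.

Lemma big_ord2 (V : nmodType) (F : 'I_2 -> V) : \sum_(i < 2) F i = F up + F down.
Proof.
rewrite big_ord_recr big_ord_recr big_ord0 /= add0r.
by congr (F _ + F _); apply/val_inj.
Qed.

Lemma ord2P (k : 'I_2) : k = up \/ k = down.
Proof. by case: k => [[|[|//]] ?]; [left|right]; apply/val_inj. Qed.

Section Unimodular.
Variable F : numClosedFieldType.
Implicit Types x z : F.

(* Rewriting with rmorphM and friends leaves the conjugation behind a morphism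
   coercion that later rewrite rules no longer match. *)
Lemma conjCM x z : (x * z)^* = x^* * z^*. Proof. exact: rmorphM. Qed.
Lemma conjCD x z : (x + z)^* = x^* + z^*. Proof. exact: rmorphD. Qed.
Lemma conjCN x : (- x)^* = - x^*. Proof. exact: rmorphN. Qed.
Lemma conjCV x : (x^-1)^* = x^*^-1. Proof. exact: fmorphV. Qed.

Lemma unit_neq0 x : x * x^* = 1 -> x != 0.
Proof. by move/eqP; apply: contraTneq => ->; rewrite mul0r eq_sym oner_eq0. Qed.

Lemma exists_unit_sq_conj z : z != 0 ->
  exists t : F, t * t^* = 1 /\ t ^+ 2 * z^* = - z.
Proof.
move=> z_neq0.
have n_neq0 : `|z| != 0 by rewrite normr_eq0.
have zzJ : z * z^* = `|z| * `|z| by rewrite -expr2 normCK.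
exists ('i * z / `|z|); split.
  rewrite !conjCM conjCV conj_normC conjCi.
  transitivity (- 'i ^+ 2 * (z * z^*) / (`|z| * `|z|)); first by field.
  by rewrite zzJ sqrCi opprK mul1r divff // mulf_neq0.
transitivity ('i ^+ 2 * z * (z * z^*) / (`|z| * `|z|)); first by field.
by rewrite zzJ sqrCi mulfK ?mulf_neq0 // mulN1r.
Qed.

End Unimodular.

Section Walk.
Variable R : realType.
Implicit Types (C : 'M[R[i]]_2) (g : 'cV[R[i]]_2).

(* Rewrite rules stated directly on entries of psi_n are keyed on
   fun_of_matrix and try to unify every entry of C with psi_n, which is slow. *)
Definition amp C g n j k : R[i] := psi_n C g n j k 0.

Lemma ampS_up C g n j : amp C g n.+1 j up =
  C up up * amp C g n (j - 1) up + C up down * amp C g n (j - 1) down.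
Proof. by rewrite /amp /psi_n iterS /walk_step !mxE eqxx big_ord2. Qed.

Lemma ampS_down C g n j : amp C g n.+1 j down =
  C down up * amp C g n (j + 1) up + C down down * amp C g n (j + 1) down.
Proof. by rewrite /amp /psi_n iterS /walk_step !mxE /= big_ord2. Qed.

Lemma amp0 C g j k : amp C g 0 j k = if j == 0 then g k 0 else 0.
Proof. by rewrite /amp /psi_n /= /init_state; case: ifP => // _; rewrite mxE. Qed.

Lemma probE C g j n : prob C g j n =
  amp C g n j up * (amp C g n j up)^* + amp C g n j down * (amp C g n j down)^*.
Proof. by rewrite /prob !normCK. Qed.

(* The hypotheses say that (u, d)(j) |-> (w^j p d(-j), w^j q u(-j)) / lam fixes
   the initial state and commutes with the walk. *)
Section Mirror.
Variables (C : 'M[R[i]]_2) (g : 'cV[R[i]]_2) (w p q lam : R[i]).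
Hypotheses (w_neq0 : w != 0) (C_diag : C up up = w * C down down)
  (C_anti : C up down * q = w * C down up * p)
  (g_up : p * g down 0 = lam * g up 0) (g_down : q * g up 0 = lam * g down 0).

Lemma amp_mirror n j :
  lam * amp C g n j up = w ^ j * p * amp C g n (- j) down /\
  lam * amp C g n j down = w ^ j * q * amp C g n (- j) up.
Proof.
elim: n j => [|n IH] j.
  rewrite !amp0 oppr_eq0; case: eqP => [->|_]; last by rewrite !mulr0.
  by rewrite expr0z !mul1r g_up g_down.
rewrite ampS_up ampS_down ampS_up ampS_down.
have [IHu IHd] := IH (j - 1); have [IHu' IHd'] := IH (j + 1).
rewrite opprB in IHu IHd; rewrite opprD in IHu' IHd'; rewrite (addrC (- j) 1).
have wS k : w ^ (k + 1) = w ^ k * w by rewrite expfzDr // expr1z.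
have wP : w ^ j = w ^ (j - 1) * w by rewrite -wS subrK.
split.
- rewrite mulrDr !mulrA ![lam * _]mulrC -!mulrA IHu IHd wP C_diag.
  transitivity (w ^ (j - 1) * (w * C down down * p * amp C g n (1 - j) down
    + (C up down * q) * amp C g n (1 - j) up)); first by ring.
  rewrite C_anti; ring.
- rewrite mulrDr !mulrA ![lam * _]mulrC -!mulrA IHu' IHd' wS C_diag.
  transitivity (w ^ j * ((w * C down up * p) * amp C g n (- j - 1) down
    + C down down * w * q * amp C g n (- j - 1) up)); first by ring.
  rewrite -C_anti; ring.
Qed.

Hypotheses (w_unit : w * w^* = 1) (pq_norm : p * p^* = q * q^*)
  (lam_norm : lam * lam^* = p * p^*) (lam_neq0 : lam != 0).

Lemma mirror_symmetric : symmetric_in_distribution C g.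
Proof.
move=> j n; have [Mu Md] := amp_mirror n j.
have llJ_neq0 : lam * lam^* != 0 by rewrite mul_conjC_eq0.
apply: (mulfI llJ_neq0); rewrite !probE.
have wj_unit : w ^ j * (w ^ j)^* = 1.
  by rewrite rmorphXz ?unitfE //= -expfzMl w_unit exp1rz.
transitivity ((lam * amp C g n j up) * (lam * amp C g n j up)^* +
   (lam * amp C g n j down) * (lam * amp C g n j down)^*).
  rewrite !conjCM; ring.
rewrite Mu Md !conjCM.
set U := amp C g n (- j) up; set D := amp C g n (- j) down.
transitivity (w ^ j * (w ^ j)^* *
  (p * p^* * (D * D^*) + q * q^* * (U * U^*))); first by ring.
rewrite wj_unit lam_norm pq_norm; ring.
Qed.

End Mirror.
End Walk.

Section States.
Variable R : realType.

Lemma phase_exists (z : R[i]) : z * z^* = 1 -> exists eta : R, z = phase eta.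
Proof.
case: z => x y; simpc => /eqP; rewrite eq_complex /= => /andP[/eqP xy1 _].
have x_bound : -1 <= x <= 1.
  rewrite -ler_norml -(@ler_pXn2r _ 2) ?nnegrE // real_normK ?num_real // expr1n -xy1.
  by rewrite -!expr2 lerDl sqr_ge0.
have sin_acos_x : Num.sqrt (1 - x ^+ 2) = `|y|.
  by rewrite -xy1 -!expr2 addrC addKr sqrtr_sqr.
have phaseE (eta : R) : phase eta = (cos eta +i* sin eta)%C by rewrite /phase; simpc.
have [y_ge0|y_lt0] := leP 0 y.
  by exists (acos x); rewrite phaseE acosK ?in_itv //= sin_acos // sin_acos_x ger0_norm.
exists (- acos x).
by rewrite phaseE cosN sinN acosK ?in_itv //= sin_acos // sin_acos_x ltr0_norm // opprK.
Qed.

Definition inv_sqrt2 : R[i] := sqrtC 2^-1.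

Lemma inv_sqrt2J : inv_sqrt2^* = inv_sqrt2.
Proof. by rewrite geC0_conj // sqrtC_ge0 invr_ge0 ler0n. Qed.

Lemma inv_sqrt2_sq : inv_sqrt2 * inv_sqrt2 = 2^-1. Proof. by rewrite -expr2 sqrtCK. Qed.

Lemma inv_sqrt2_neq0 : inv_sqrt2 != 0.
Proof.
move/eqP: inv_sqrt2_sq; apply: contraTneq => ->.
by rewrite mulr0 eq_sym invr_eq0 pnatr_eq0.
Qed.

Definition vec (x y : R[i]) : 'cV[R[i]]_2 := \col_k (if k == up then x else y).

Lemma vec_up x y : vec x y up 0 = x. Proof. by rewrite mxE. Qed.
Lemma vec_down x y : vec x y down 0 = y. Proof. by rewrite mxE. Qed.

Lemma vecE (g : 'cV[R[i]]_2) : vec (g up 0) (g down 0) = g.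
Proof. by apply/matrixP => k l; rewrite (ord1 l); case: (ord2P k) => ->; rewrite mxE. Qed.

Lemma scale_vec c x y : c *: vec x y = vec (c * x) (c * y).
Proof. by apply/matrixP => k l; rewrite !mxE; case: ifP. Qed.

Definition balanced (t : R[i]) : 'cV[R[i]]_2 := vec inv_sqrt2 (inv_sqrt2 * t).

Lemma balanced_unit t : t * t^* = 1 -> is_unit_vector (balanced t).
Proof.
move=> t_unit; rewrite /is_unit_vector vec_up vec_down !normCK conjCM inv_sqrt2J.
transitivity ((inv_sqrt2 * inv_sqrt2) * (1 + t * t^*)); first by ring.
by rewrite inv_sqrt2_sq t_unit -(natrD _ 1 1) mulVf // pnatr_eq0.
Qed.

Lemma phase_equiv_balanced t x : x * x^* = 2^-1 ->
  phase_equiv (balanced t) (vec x (t * x)).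
Proof.
move=> x_norm.
have [eta eta_x] : exists eta, x / inv_sqrt2 = phase eta.
  apply: phase_exists; rewrite conjCM conjCV inv_sqrt2J.
  transitivity (x * x^* / (inv_sqrt2 * inv_sqrt2)).
    by field; rewrite inv_sqrt2_neq0.
  by rewrite x_norm inv_sqrt2_sq divff // invr_eq0 pnatr_eq0.
exists eta; rewrite scale_vec -eta_x divfK ?inv_sqrt2_neq0 //.
by congr vec; field; rewrite inv_sqrt2_neq0.
Qed.

Lemma balanced_inj : injective balanced.
Proof.
move=> t u /matrixP/(_ down 0); rewrite !vec_down.
exact: (mulfI inv_sqrt2_neq0).
Qed.

Lemma phase_equiv_balanced_inj t u :
  phase_equiv (balanced t) (balanced u) -> t = u.
Proof.
case=> eta /matrixP E; have := E up 0; have := E down 0.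
rewrite scale_vec !vec_up !vec_down => Edown Eup.
have phase1 : phase eta = 1 by apply: (mulIf inv_sqrt2_neq0); rewrite -Eup mul1r.
by move: Edown; rewrite phase1 mul1r => /(mulfI inv_sqrt2_neq0).
Qed.

End States.

Arguments inv_sqrt2 {R}.
Arguments balanced {R}.

Section Coin.
Variable R : realType.
Implicit Types (C : 'M[R[i]]_2).

Lemma unitary_rows C : qw_unitary C ->
  [/\ C up up * (C up up)^* + C up down * (C up down)^* = 1,
      C down up * (C down up)^* + C down down * (C down down)^* = 1 &
      C up up * (C down up)^* + C up down * (C down down)^* = 0].
Proof.
move=> C_unitary.
have E i j : (C *m qw_adj C) i j = (1%:M : 'M[R[i]]_2) i j by rewrite C_unitary.
by move: (E up up) (E down down) (E up down); rewrite !mxE !big_ord2 !mxE.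
Qed.

Lemma trivial_coin_cases C : qw_unitary C -> trivial_coin C ->
  [/\ C up down = 0, C down up = 0, C up up * (C up up)^* = 1
    & C down down * (C down down)^* = 1] \/
  [/\ C up up = 0, C down down = 0, C up down * (C up down)^* = 1
    & C down up * (C down up)^* = 1].
Proof.
move=> /unitary_rows[]; rewrite /trivial_coin.
set a := C up up; set b := C up down; set c := C down up; set d := C down down.
move=> row1 row2 row12 /eqP; rewrite !mulf_eq0 => /orP[/orP[/orP[]|]|] /eqP H.
- right; move: row1 row12; rewrite H mul0r add0r => b_unit; rewrite mul0r add0r.
  move/eqP; rewrite mulf_eq0 (negbTE (unit_neq0 b_unit)) conjC_eq0 => /eqP d0.
  by move: row2; rewrite d0 mul0r addr0.
- left; move: row1 row12; rewrite H mul0r addr0 => a_unit; rewrite mul0r addr0.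
  move/eqP; rewrite mulf_eq0 (negbTE (unit_neq0 a_unit)) conjC_eq0 => /eqP c0.
  by move: row2; rewrite c0 mul0r add0r.
- left; move: row2 row12; rewrite H mul0r add0r => d_unit; rewrite conjC0 mulr0 add0r.
  move/eqP; rewrite mulf_eq0 conjC_eq0 (negbTE (unit_neq0 d_unit)) orbF => /eqP b0.
  by move: row1; rewrite b0 mul0r addr0.
- right; move: row2 row12; rewrite H mul0r addr0 => c_unit; rewrite conjC0 mulr0 addr0.
  move/eqP; rewrite mulf_eq0 conjC_eq0 (negbTE (unit_neq0 c_unit)) orbF => /eqP a0.
  by move: row1; rewrite a0 mul0r add0r.
Qed.

Lemma nontrivial_coin_form C : qw_unitary C -> ~ trivial_coin C ->
  exists a b e : R[i],
   [/\ C up up = a, C up down = b, C down up = - (e * b^*) & C down down = e * a^*] /\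
   [/\ a != 0, b != 0, a * a^* + b * b^* = 1 & e * e^* = 1].
Proof.
move=> /unitary_rows[row1 row2 row12] /eqP.
rewrite !mulf_eq0 !negb_or => /andP[/andP[/andP[a_neq0 b_neq0] _] _].
move: row1 row2 row12 a_neq0 b_neq0.
set a := C up up; set b := C up down; set c := C down up; set d := C down down.
move=> row1 row2 row12 a_neq0 b_neq0.
pose e := d / a^*.
have d_eq : d = e * a^* by rewrite /e divfK ?conjC_eq0.
have cJ_eq : c^* = - (b * e^*).
  apply: (mulfI a_neq0); move/eqP: row12; rewrite addr_eq0 => /eqP ->.
  by rewrite d_eq conjCM conjCK; ring.
have c_eq : c = - (e * b^*) by rewrite -[c]conjCK cJ_eq conjCN conjCM conjCK mulrC.
have e_unit : e * e^* = 1.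
  transitivity (e * e^* * (a * a^* + b * b^*)); first by rewrite row1 mulr1.
  by rewrite -row2 c_eq d_eq conjCN !conjCM !conjCK; ring.
by exists a, b, e.
Qed.

End Coin.

Section NontrivialCoin.
Variables (R : realType) (C : 'M[R[i]]_2) (a b e : R[i]).
Hypotheses (Ca : C up up = a) (Cb : C up down = b)
  (Cc : C down up = - (e * b^*)) (Cd : C down down = e * a^*)
  (a_neq0 : a != 0) (b_neq0 : b != 0) (ab_unit : a * a^* + b * b^* = 1)
  (e_unit : e * e^* = 1).

Let e_neq0 : e != 0 := unit_neq0 e_unit.
Let eJ : e^* = e^-1. Proof. by apply: (mulfI e_neq0); rewrite e_unit mulfV. Qed.

Lemma nontrivial_balanced_symmetric t : t * t^* = 1 ->
  t ^+ 2 * (a^* * b) = - (a * b^*) -> symmetric_in_distribution C (balanced t).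
Proof.
move=> t_unit t_sq.
have aJ_neq0 : a^* != 0 by rewrite conjC_eq0.
apply: (@mirror_symmetric _ _ _ (a / (e * a^*)) (b * (e * a^*))
  (- (a * (e * b^*))) (b * (e * a^*) * t)).
- by rewrite !mulf_neq0 // invr_eq0 mulf_neq0.
- by rewrite Ca Cd divfK // mulf_neq0.
- by rewrite Cb Cc; field; rewrite ?conjC_eq0 e_neq0 a_neq0.
- by rewrite vec_up vec_down; ring.
- rewrite vec_up vec_down.
  transitivity (e * inv_sqrt2 * (- (a * b^*))); first by ring.
  by rewrite -t_sq; ring.
- rewrite !(conjCM, conjCV, conjCK).
  transitivity (a * a^* / (a * a^* * (e * e^*))).
    by field; rewrite ?conjC_eq0 e_neq0 a_neq0.
  by rewrite e_unit mulr1 divff // mul_conjC_eq0.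
- by rewrite !conjCN !conjCM !conjCK; ring.
- transitivity (b * (e * a^*) * (b * (e * a^*))^* * (t * t^*)).
    by rewrite conjCM; ring.
  by rewrite t_unit mulr1.
- by rewrite !mulf_neq0 // ?unit_neq0.
Qed.

(* The time arguments are written 1%N and 3%N: in ring_scope a bare numeral of
   type nat elaborates to a cast 3%:R, which the symmetry hypothesis would not
   match syntactically. *)
Lemma prob_asymmetry1 x y :
  prob C (vec x y) 1 1%N - prob C (vec x y) (-1) 1%N =
  (a * a^* - b * b^*) * (x * x^* - y * y^*) + 2 * (a * b^* * x * y^* + a^* * b * x^* * y).
Proof.
rewrite !probE !(ampS_up, ampS_down) !amp0 /= !(mulr0, addr0, add0r).
rewrite !(vec_up, vec_down) Ca Cb Cc Cd !(conjCD, conjCM, conjCN, conjCK, conjC0) eJ.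
by field; rewrite e_neq0.
Qed.

Lemma prob_asymmetry3 x y :
  prob C (vec x y) 1 3%N - prob C (vec x y) (-1) 3%N =
  b * b^* * ((4 * (a * b^* * (a^* * b)) - (a * a^* - b * b^*) ^+ 2) * (x * x^* - y * y^*)
    - 4 * (a * a^* - b * b^*) * (a * b^* * x * y^* + a^* * b * x^* * y)
    + a * a^* * ((a * a^* - b * b^*) * (x * x^* - y * y^*)
                 + 2 * (a * b^* * x * y^* + a^* * b * x^* * y))).
Proof.
rewrite !probE !(ampS_up, ampS_down) !amp0 /= !(mulr0, addr0, add0r).
rewrite !(vec_up, vec_down) Ca Cb Cc Cd !(conjCD, conjCM, conjCN, conjCK, conjC0) eJ.
by field; rewrite e_neq0.
Qed.

Lemma exists_twist : exists t : R[i], t * t^* = 1 /\ t ^+ 2 * (a^* * b) = - (a * b^*).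
Proof.
have ab_neq0 : a * b^* != 0 by rewrite mulf_neq0 ?conjC_eq0.
have [t [t_unit t_sq]] := exists_unit_sq_conj ab_neq0.
by exists t; rewrite -t_sq conjCM conjCK.
Qed.

Lemma symmetric_amplitude_constraints x y : symmetric_in_distribution C (vec x y) ->
  x * x^* = y * y^* /\ a * b^* * x * y^* + a^* * b * x^* * y = 0.
Proof.
move=> sym; have skew1 := prob_asymmetry1 x y; have skew3 := prob_asymmetry3 x y.
rewrite (sym 1 1%N) (sym 1 3%N) !subrr in skew1 skew3.
set A := a * a^* - b * b^* in skew1 skew3.
set m := x * x^* - y * y^* in skew1 skew3 *.
set s := a * b^* * x * y^* + a^* * b * x^* * y in skew1 skew3 *.
rewrite -skew1 mulr0 addr0 in skew3.
have bbJ_neq0 : b * b^* != 0 by rewrite mul_conjC_eq0.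
have {}skew3 : (4 * (a * b^* * (a^* * b)) - A ^+ 2) * m - 4 * A * s = 0.
  by move/esym/eqP: skew3; rewrite mulf_eq0 (negbTE bbJ_neq0) => /eqP.
have m0 : m = 0.
  transitivity ((a * a^* + b * b^*) ^+ 2 * m); first by rewrite ab_unit expr1n mul1r.
  transitivity ((4 * (a * b^* * (a^* * b)) - A ^+ 2) * m - 4 * A * s
    + 2 * A * (A * m + 2 * s)); first by rewrite /A; ring.
  by rewrite skew3 -skew1 mulr0 addr0.
split; first by apply/eqP; rewrite -subr_eq0 -/m m0.
by move: skew1; rewrite m0 mulr0 add0r => /esym/eqP; rewrite mulf_eq0 pnatr_eq0 => /eqP.
Qed.

Lemma symmetric_phase_equiv_balanced t g : t ^+ 2 * (a^* * b) = - (a * b^*) ->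
  is_unit_vector g -> symmetric_in_distribution C g ->
  phase_equiv (balanced t) g \/ phase_equiv (balanced (- t)) g.
Proof.
rewrite -(vecE g); move: (g up 0) (g down 0) => x y t_sq.
rewrite /is_unit_vector vec_up vec_down !normCK => xy_unit.
move=> /symmetric_amplitude_constraints[xy_norm cross0].
have x_norm : x * x^* = 2^-1.
  have two_neq0 : (2 : R[i]) != 0 by rewrite pnatr_eq0.
  by apply: (mulfI two_neq0); rewrite mulfV // mulr_natl mulr2n -xy_unit -xy_norm.
have x_neq0 : x != 0 by rewrite -mul_conjC_eq0 x_norm invr_eq0 pnatr_eq0.
have : a^* * b * x^* ^+ 2 * ((y - t * x) * (y + t * x)) = 0.
  transitivity (x^* * y * (a * b^* * x * y^* + a^* * b * x^* * y)
    + a * b^* * x * x^* * (x * x^* - y * y^*)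
    - (t ^+ 2 * (a^* * b) + a * b^*) * x ^+ 2 * x^* ^+ 2); first by ring.
  by rewrite cross0 xy_norm t_sq subrr addNr; ring.
move/eqP; rewrite !mulf_eq0 !conjC_eq0 (negbTE a_neq0) (negbTE b_neq0) (negbTE x_neq0) /=.
rewrite subr_eq0 addr_eq0 => /orP[]/eqP ->; [left | right].
  exact: phase_equiv_balanced.
by rewrite -mulNr; exact: phase_equiv_balanced.
Qed.

End NontrivialCoin.

Lemma uncountable_unit_interval (R : realType) :
  ~ countable [set r : R | 0 <= r <= 1]%classic.
Proof.
move=> /countable_lebesgue_measure0.
have -> : [set r : R | 0 <= r <= 1]%classic = [set` `[0, 1]%R]%classic.
  by apply/seteqP; split => r /=; rewrite in_itv.
rewrite lebesgue_measure_itv /= lte_fin ltr01 => /eqP.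
by rewrite -EFinD subr0 eqe oner_eq0.
Qed.

Section TrivialCoin.
Variables (R : realType) (C : 'M[R[i]]_2).
Hypotheses (C_unitary : qw_unitary C) (C_trivial : trivial_coin C).

Lemma trivial_balanced_symmetric u : u * u^* = 1 ->
  symmetric_in_distribution C (balanced u).
Proof.
move=> u_unit; have u_neq0 := unit_neq0 u_unit.
have g_up : u^* * balanced u down 0 = 1 * balanced u up 0.
  by rewrite vec_up vec_down mulrCA [u^* * u]mulrC u_unit mulr1 mul1r.
have g_down : u * balanced u up 0 = 1 * balanced u down 0.
  by rewrite vec_up vec_down mul1r mulrC.
have pq_norm : u^* * u^*^* = u * u^* by rewrite conjCK mulrC.
have lam_norm : 1 * 1^* = u^* * u^*^* by rewrite conjC1 mul1r pq_norm.
have [[Cb Cc Ca Cd]|[Ca Cd Cb Cc]] := trivial_coin_cases C_unitary C_trivial.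
- have Cd_neq0 := unit_neq0 Cd; have Ca_neq0 := unit_neq0 Ca.
  apply: (mirror_symmetric (w := C up up / C down down)
    _ _ _ g_up g_down _ pq_norm lam_norm _).
  + by rewrite mulf_neq0 ?invr_eq0.
  + by rewrite divfK.
  + by rewrite Cb Cc mulr0 !mul0r.
  + rewrite conjCM conjCV.
    transitivity ((C up up * (C up up)^*) / (C down down * (C down down)^*)).
      by field; rewrite conjC_eq0 Cd_neq0.
    by rewrite Ca Cd divr1.
  + exact: oner_neq0.
- have Cc_neq0 := unit_neq0 Cc; have Cb_neq0 := unit_neq0 Cb.
  apply: (mirror_symmetric (w := C up down * u / (C down up * u^*))
    _ _ _ g_up g_down _ pq_norm lam_norm _).
  + by rewrite !mulf_neq0 ?invr_eq0 ?mulf_neq0 ?conjC_eq0.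
  + by rewrite Ca Cd mulr0.
  + by field; rewrite conjC_eq0 u_neq0 Cc_neq0.
  + rewrite !(conjCM, conjCV, conjCK).
    transitivity ((C up down * (C up down)^*) * (u * u^*)
      / ((C down up * (C down up)^*) * (u * u^*))).
      by field; rewrite !conjC_eq0 u_neq0 Cc_neq0.
    by rewrite Cb Cc u_unit !mul1r invr1.
  + exact: oner_neq0.
Qed.

Definition unit_of_cos (r : R) : R[i] := Complex r (Num.sqrt (1 - r ^+ 2)).

Lemma unit_of_cos_unit r : 0 <= r <= 1 -> unit_of_cos r * (unit_of_cos r)^* = 1.
Proof.
move=> /andP[r_ge0 r_le1].
have h : 0 <= 1 - r ^+ 2 by rewrite subr_ge0 exprn_ile1.
rewrite /unit_of_cos; simpc.
by rewrite -!expr2 sqr_sqrtr // addrC subrK [_ * r]mulrC addNr.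
Qed.

Lemma trivial_coin_family : exists S : set 'cV[R[i]]_2,
  [/\ ~ countable S,
      (forall g, S g -> is_unit_vector g /\ symmetric_in_distribution C g) &
      (forall g g', S g -> S g' -> g <> g' -> ~ phase_equiv g g')].
Proof.
pose I := [set r : R | 0 <= r <= 1]%classic.
exists [set balanced (unit_of_cos r) | r in I]%classic; split.
- rewrite (eq_countable (inj_card_eq _)); first exact: uncountable_unit_interval.
  by move=> r r' _ _ /= /balanced_inj /(congr1 (@complex.Re _)).
- move=> _ [r r01 <-]; have r_unit := unit_of_cos_unit r01.
  by split; [exact: balanced_unit | exact: trivial_balanced_symmetric].
- move=> _ _ [r _ <-] [r' _ <-] neq /phase_equiv_balanced_inj eq.
  by apply: neq; rewrite /= eq.
Qed.

End TrivialCoin.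

Theorem theorem1 (R : realType) (C : 'M[R[i]]_2) (HC : qw_unitary C) :
  (~ trivial_coin C ->
     exists g1 g2 : 'cV[R[i]]_2,
       [/\ is_unit_vector g1 /\ is_unit_vector g2,
           symmetric_in_distribution C g1, symmetric_in_distribution C g2,
           ~ phase_equiv g1 g2 &
           forall g : 'cV[R[i]]_2, is_unit_vector g ->
             symmetric_in_distribution C g -> phase_equiv g1 g \/ phase_equiv g2 g])
  /\
  (trivial_coin C ->
     exists S : set 'cV[R[i]]_2,
       [/\ ~ countable S,
           (forall g, S g -> is_unit_vector g /\ symmetric_in_distribution C g) &
           (forall g g', S g -> S g' -> g <> g' -> ~ phase_equiv g g')]).
Proof.
split=> [nontrivial | trivial]; last exact: trivial_coin_family.
have [a [b [e [[Ca Cb Cc Cd] [a_neq0 b_neq0 ab_unit e_unit]]]]] :=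
  nontrivial_coin_form HC nontrivial.
have [t [t_unit t_sq]] := exists_twist a_neq0 b_neq0.
have Nt_unit : - t * (- t)^* = 1 by rewrite conjCN mulrNN.
have Nt_sq : (- t) ^+ 2 * (a^* * b) = - (a * b^*) by rewrite sqrrN.
exists (balanced t), (balanced (- t)); split.
- by split; apply: balanced_unit.
- exact: (nontrivial_balanced_symmetric Ca Cb Cc Cd a_neq0 b_neq0 e_unit t_unit t_sq).
- exact: (nontrivial_balanced_symmetric Ca Cb Cc Cd a_neq0 b_neq0 e_unit Nt_unit Nt_sq).
- move=> /phase_equiv_balanced_inj/eqP; rewrite -addr_eq0 -mulr2n mulrn_eq0 /=.
  by rewrite (negbTE (unit_neq0 t_unit)).
- move=> g.
  exact: (symmetric_phase_equiv_balanced Ca Cb Cc Cd a_neq0 b_neq0 ab_unit e_unit t_sq).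
Qed.
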